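(* For every tree $T=(V,E,w)$ whose cost function $w$ is down-monotonic and rounded, there exists an optimal extended strategy function for $T$ that is aligned.
   Context: $w$ is down-monotonic if there is a vertex $r$ such that $w(v)\le w(u)$ whenever $v$ lies on the path between $r$ and $u$; $w$ is rounded if each $w(u)$ equals $2^j$ for a nonnegative integer $j$. Intervals are of the form $[a,b)$ with integers $0\le a<b$, $|[a,b)|=b-a$; for $I=[a,b)$, $I'=[a',b')$ write $I>I'$ iff $a\ge b'$. An extended strategy function for $T$ is a map $f$ assigning to each vertex $u$ an interval $f(u)$ with $|f(u)|\ge w(u)$, such that for any distinct $v_1,v_2$ with $f(v_1)\cap f(v_2)\ne\emptyset$, the path between $v_1$ and $v_2$ contains a vertex $v_3$ with $f(v_3)>f(v_1)$ and $f(v_3)>f(v_2)$. It is optimal if $\sup\bigcup_{u\in V}f(u)$ is minimum among all extended strategy functions for $T$. A vertex $u$ is aligned if both endpoints of $f(u)$ are multiples of $w(u)$, and $f$ is aligned if every vertex is aligned. *)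

From mathcomp Require Import all_boot.
Set Implicit Arguments. Unset Strict Implicit. Unset Printing Implicit Defensive.

Definition simple_graph (V : finType) (e : rel V) :=
  irreflexive e /\ symmetric e.

Definition spath (V : finType) (e : rel V) (u v : V) (p : seq V) :=
  [/\ path e u p, last u p = v & uniq (u :: p)].

Definition connected_graph (V : finType) (e : rel V) :=
  forall u v : V, exists p, spath e u v p.

Definition acyclic_graph (V : finType) (e : rel V) :=
  forall c : seq V, uniq c -> 3 <= size c -> ~~ cycle e c.

Definition is_tree (V : finType) (e : rel V) :=
  [/\ simple_graph e, connected_graph e & acyclic_graph e].

Definition on_path (V : finType) (e : rel V) (u v x : V) :=
  exists p, spath e u v p /\ x \in u :: p.

Definition down_monotonic (V : finType) (e : rel V) (w : V -> nat) :=
  exists r : V, forall u v : V, on_path e r u v -> w v <= w u.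

Definition rounded (V : finType) (w : V -> nat) :=
  forall u, exists j : nat, w u = 2 ^ j.

(* An interval [a,b) is represented by the pair (a,b), with a < b. *)
Definition ilen (I : nat * nat) := I.2 - I.1.
Definition igt (I J : nat * nat) := J.2 <= I.1.
Definition imeet (I J : nat * nat) := maxn I.1 J.1 < minn I.2 J.2.

Definition ext_strategy (V : finType) (e : rel V) (w : V -> nat)
    (f : V -> nat * nat) :=
  (forall u, (f u).1 < (f u).2) /\
  (forall u, w u <= ilen (f u)) /\
  (forall v1 v2, v1 != v2 -> imeet (f v1) (f v2) ->
     exists v3, on_path e v1 v2 v3 /\ igt (f v3) (f v1) /\ igt (f v3) (f v2)).

(* sup of the union of the intervals [a,b) (as reals) = max of right ends *)
Definition span (V : finType) (f : V -> nat * nat) := \max_(u : V) (f u).2.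

Definition optimal_ext_strategy (V : finType) (e : rel V) (w : V -> nat)
    (f : V -> nat * nat) :=
  ext_strategy e w f /\
  forall g, ext_strategy e w g -> span f <= span g.

Definition aligned (V : finType) (w : V -> nat) (f : V -> nat * nat) :=
  forall u, (w u %| (f u).1) && (w u %| (f u).2).

From mathcomp Require Import all_boot zify.
From Stdlib Require Import Classical ClassicalEpsilon.
Set Implicit Arguments. Unset Strict Implicit. Unset Printing Implicit Defensive.

(* We realign partial strategies: interval assignments to a vertex set X in which
   any vertex outside X may serve as a separator. By induction on |X|, each one has
   an aligned counterpart of no larger span; applied to an optimal strategy on all
   vertices, this gives an aligned optimal one.
   If a vertex z outside X lies on a path between two vertices of X, then z
   separates X into two sides that never need each other as separators: realign
   both sides and combine them.
   Otherwise X is path-convex, so the vertex x whose interval ends highest lies above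
   all the others. Split X - x into the branch of x away from the root r and the
   rest, and realign both parts. By down-monotonicity all weights in the branch are
   powers of two that are multiples of w x, so the branch part ends at a multiple
   of w x. If the higher part ends at a multiple N of w x, put x at [N, N + w x).
   Otherwise the top vertex y of the outer part has w y < w x, and both divide the
   end M of that part; put x at [M - w y, M - w y + w x), realign everything but y
   below it and put y on top, at [M - w y + w x, M + w x). The span never grows,
   as the original interval of x starts above all others and is at least w x long. *)

Definition asbool (P : Prop) : bool :=
  if excluded_middle_informative P then true else false.

Lemma asboolP (P : Prop) : reflect P (asbool P).
Proof. by rewrite /asbool; case: excluded_middle_informative => h; constructor. Qed.

Section TreePaths.
Variables (V : finType) (e : rel V).

Lemma spath_rev u v p : symmetric e ->
  spath e u v p -> spath e v u (rev (belast u p)) /\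
  (forall x, (x \in v :: rev (belast u p)) = (x \in u :: p)).
Proof.
move=> sym [pp lp up].
have E : v :: rev (belast u p) = rev (u :: p) by rewrite [u :: p]lastI rev_rcons lp.
split; last by move=> x; rewrite E mem_rev.
split; last by rewrite E rev_uniq.
- rewrite -lp rev_path (@eq_path _ _ e) // => x y /=; exact: sym.
- by rewrite -(last_cons u) E rev_cons last_rcons.
Qed.

Lemma acyclic_no_fork u s1 t1 z : symmetric e -> acyclic_graph e ->
  path e u (rcons s1 z) -> path e u (rcons t1 z) ->
  uniq (u :: rcons s1 z) -> uniq (u :: rcons t1 z) ->
  ~~ has (mem t1) s1 -> (s1 != [::]) || (t1 != [::]) -> False.
Proof.
move=> sym acyc ps pt us ut dis ne.
set c := u :: s1 ++ z :: rev t1.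
suff [uc szc cc] : [/\ uniq c, 3 <= size c & cycle e c] by move: (acyc c uc szc); rewrite cc.
split.
- move: us ut; rewrite /c -!cats1 /= !mem_cat !cat_uniq /= !inE !negb_or.
  move=> /and4P[/andP[us1 uz] us1' /andP[zs1 _] _].
  move=> /and4P[/andP[ut1 _] ut1' /andP[zt1 _] _].
  rewrite !mem_rev us1 uz ut1 us1' zs1 zt1 rev_uniq ut1' /= andbT.
  apply/hasPn => x; rewrite mem_rev => xt1; apply/negP => xs1.
  by move/hasPn: dis => /(_ x xs1); rewrite /= xt1.
- rewrite /c /= size_cat /= size_rev.
  by move: ne; rewrite -!size_eq0 -!lt0n ltnS addnS ltnS addn_gt0.
- rewrite /c /= rcons_cat /= cat_path; move: ps; rewrite rcons_path => /andP[-> /= ->] /=.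
  have := rev_path e u (rcons t1 z); rewrite last_rcons belast_rcons rev_cons => ->.
  by rewrite (@eq_path _ _ e) // => x y /=; exact: sym.
Qed.

Hypothesis tree_e : is_tree e.

Lemma spath_unique u v p q : spath e u v p -> spath e u v q -> p = q.
Proof.
have [[_ sym] _ acyc] := tree_e.
elim: p u q => [|a p IH] u [|b q] //.
- move=> [_ /= <- _] [_ lq uq].
  have : u \in b :: q by rewrite -[X in X \in _]lq /= mem_last.
  by move: uq => /= /andP[/negP].
- move=> [_ lp up] [_ /= lq _].
  have : u \in a :: p by rewrite lq -lp /= mem_last.
  by move: up => /= /andP[/negP].
move=> [pp lp up] [pq lq uq].
case: (eqVneq a b) => [eab|ab]; first subst b.
  congr (_ :: _); apply: (IH a).
  - by move: pp up => /= /andP[_ ?] /andP[_ ?]; split.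
  - by move: pq uq => /= /andP[_ ?] /andP[_ ?]; split.
exfalso.
have vt : v \in b :: q by rewrite -lq /= mem_last.
have vs : v \in a :: p by rewrite -lp /= mem_last.
move: pp up vs pq uq vt ab; move Hs: (a :: p) => s; move Ht: (b :: q) => t.
move=> ps us vs pt ut vt ab.
(* The first vertex of the first path lying on the second one closes a cycle. *)
have hs : has (mem t) s by apply/hasP; exists v.
move: ps us Hs; case/split_find: hs => z s1 s2 zt dis.
move: pt ut Ht dis; case/path.splitP: zt => t1 t2.
rewrite !cat_path -!cat_cons !cat_uniq.
move=> /andP[pt _] /and3P[ut _ _] Ht dis /andP[ps _] /and3P[us _ _] Hs.
apply: (acyclic_no_fork sym acyc ps pt us ut).
  apply: contra dis; apply: sub_has => x /=.
  by rewrite mem_cat mem_rcons inE => ->; rewrite !orbT.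
case: s1 t1 {ps pt us ut dis} Hs Ht => [|? ?] [|? ?] //= [az _] [bz _].
by rewrite az bz eqxx in ab.
Qed.

Lemma on_path_spath u v x :
  on_path e u v x <-> forall p, spath e u v p -> x \in u :: p.
Proof.
split; first by move=> [p [sp xp]] q sq; rewrite -(spath_unique sp sq).
have [_ conn _] := tree_e; have [p sp] := conn u v.
by move=> H; exists p; split => //; apply: H.
Qed.

Lemma on_path_sym u v x : on_path e u v x -> on_path e v u x.
Proof.
have [[_ sym] _ _] := tree_e; move=> [p [sp xp]].
have [sp' Hm] := spath_rev sym sp.
by exists (rev (belast u p)); split => //; rewrite Hm.
Qed.

Lemma on_path_l u v : on_path e u v u.
Proof.
have [_ conn _] := tree_e; have [p sp] := conn u v.
by exists p; split => //; rewrite inE eqxx.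
Qed.

Lemma on_path_r u v : on_path e u v v.
Proof. exact/on_path_sym/on_path_l. Qed.

Lemma on_path_same u x : on_path e u u x -> x = u.
Proof.
move/on_path_spath/(_ [::]); rewrite inE => H.
by apply/eqP/H; split.
Qed.

Lemma on_path_split u v c x :
  on_path e u v x -> on_path e u c x \/ on_path e c v x.
Proof.
have [_ conn _] := tree_e.
have [p1 [pp1 lp1 up1]] := conn u c; have [p2 [pp2 lp2 up2]] := conn c v.
have walk : path e u (p1 ++ p2) by rewrite cat_path pp1 lp1.
have : last u (p1 ++ p2) = v by rewrite last_cat lp1.
case/shortenP: walk => p' pp' up' sub' lp' /on_path_spath /(_ p').
rewrite inE => /(_ (And3 pp' lp' up')) /orP[/eqP->|/sub']; first by left; apply: on_path_l.
rewrite mem_cat => /orP[xp|xp].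
  by left; exists p1; split => //; rewrite inE xp orbT.
by right; exists p2; split => //; rewrite inE xp orbT.
Qed.

Lemma on_path_meet u v z x :
  on_path e u v z -> on_path e u z x -> on_path e z v x -> x = z.
Proof.
move=> [p [[pp lp up]]]; rewrite inE => /orP[/eqP ->|zp]; first by move/on_path_same.
move: pp lp up; case/path.splitP: zp => p1 p2.
rewrite cat_path last_cat last_rcons -cat_cons cat_uniq => /andP[pp1 pp2] lp2.
move=> /and3P[up1 /hasPn dis up2].
have sp1 : spath e u z (rcons p1 z) by split; rewrite ?last_rcons.
have sp2 : spath e z v p2.
  split=> //=; rewrite up2 andbT; apply/negP => /dis.
  by rewrite -rcons_cons mem_rcons inE eqxx.
move=> /on_path_spath/(_ _ sp1); rewrite -rcons_cons mem_rcons inE => /orP[/eqP//|x1].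
move=> /on_path_spath/(_ _ sp2); rewrite inE => /orP[/eqP//|x2].
by move: (dis x x2); rewrite -rcons_cons mem_rcons inE x1 orbT.
Qed.

Lemma on_path_separate c u v x :
  on_path e c u x -> ~ on_path e c v x -> on_path e u v x.
Proof. by move=> /(on_path_split v) [|/on_path_sym]. Qed.

Lemma on_path_convex c u v x z :
  on_path e c u x -> on_path e c v x -> on_path e u v z -> on_path e c z x.
Proof.
move=> xu xv zuv; apply: NNPP => xz.
have := on_path_meet zuv (on_path_separate xu xz) (on_path_sym (on_path_separate xv xz)).
by move=> E; apply: xz; rewrite E; apply: on_path_r.
Qed.

Lemma off_path_convex c u v x z :
  ~ on_path e c u x -> ~ on_path e c v x -> on_path e u v z -> ~ on_path e c z x.
Proof.
move=> xu xv zuv xz.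
have E : x = z.
  apply: (on_path_meet zuv).
    by case: (on_path_split u xz).
  by case: (on_path_split v xz) => // /on_path_sym.
by subst x; case: (on_path_split c zuv) => [/on_path_sym|].
Qed.

Definition branch (c x : V) : {set V} := [set y | asbool (on_path e c y x)].

Lemma branchP c x y : reflect (on_path e c y x) (y \in branch c x).
Proof. by rewrite inE; apply: asboolP. Qed.

Lemma branch_convex c x u v z : u \in branch c x -> v \in branch c x ->
  on_path e u v z -> z \in branch c x.
Proof. by move=> /branchP xu /branchP xv zuv; apply/branchP; apply: on_path_convex zuv. Qed.

Lemma branchC_convex c x u v z : u \notin branch c x -> v \notin branch c x ->
  on_path e u v z -> z \notin branch c x.
Proof.
move=> /branchP xu /branchP xv zuv; apply/branchP; exact: off_path_convex zuv.
Qed.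

Lemma branch_separate c x u v : u \in branch c x -> v \notin branch c x ->
  on_path e u v x.
Proof. by move=> /branchP xu /branchP; apply: on_path_separate. Qed.

Lemma branch_self c x : x \in branch c x.
Proof. exact/branchP/on_path_r. Qed.

End TreePaths.

Lemma imeetC I J : imeet I J = imeet J I.
Proof. by rewrite /imeet maxnC minnC. Qed.

Lemma igt_nomeet I J : igt I J -> ~~ imeet I J.
Proof. rewrite /igt /imeet; lia. Qed.

Lemma leq_subr_dvdn d m n : d %| m -> d %| n -> m < n -> m <= n - d.
Proof.
move=> dm dn mn; have : d <= n - m by apply: dvdn_leq; rewrite ?subn_gt0 ?dvdn_sub.
lia.
Qed.

Section PartialStrategies.
Variables (V : finType) (e : rel V) (w : V -> nat).
Implicit Types (X Y S : {set V}) (f g : V -> nat * nat).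

Definition partial_strategy X f :=
  (forall u, u \in X -> (f u).1 < (f u).2 /\ w u <= ilen (f u)) /\
  (forall v1 v2, v1 \in X -> v2 \in X -> v1 != v2 -> imeet (f v1) (f v2) ->
     exists v3, on_path e v1 v2 v3 /\
       (v3 \notin X \/ (igt (f v3) (f v1) /\ igt (f v3) (f v2)))).

Definition span_on X f := \max_(u in X) (f u).2.

Definition aligned_on X f :=
  forall u, u \in X -> (w u %| (f u).1) && (w u %| (f u).2).

Definition path_convex X :=
  forall u v z, u \in X -> v \in X -> on_path e u v z -> z \in X.

Definition put_on_top (x : V) (N : nat) f u :=
  if u == x then (N, N + w x) else f u.

Definition glue S f g u :=
  if u \in S then f u else g u.

Lemma span_on_le X f k :
  (forall u, u \in X -> (f u).2 <= k) -> span_on X f <= k.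
Proof. by move=> H; apply/bigmax_leqP. Qed.

Lemma leq_span_on X f u : u \in X -> (f u).2 <= span_on X f.
Proof. by move=> uX; rewrite /span_on (bigD1 u) ?leq_maxl. Qed.

Lemma span_on_subset X Y f : Y \subset X -> span_on Y f <= span_on X f.
Proof. by move/subsetP=> YX; apply: span_on_le => u /YX; apply: leq_span_on. Qed.

Lemma eq_span_on X f g : {in X, f =1 g} -> span_on X f = span_on X g.
Proof. by move=> fg; apply: eq_bigr => u /fg ->. Qed.

Lemma span_on_setU X Y f : span_on (X :|: Y) f = maxn (span_on X f) (span_on Y f).
Proof.
apply/eqP; rewrite eqn_leq geq_max !span_on_subset ?subsetUl ?subsetUr // !andbT.
by apply: span_on_le => u; rewrite inE => /orP[] /leq_span_on H; rewrite leq_max H ?orbT.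
Qed.

Lemma dvdn_span_on X f d : (forall u, u \in X -> d %| (f u).2) -> d %| span_on X f.
Proof.
move=> H; apply: (big_ind (fun k => d %| k)) => // a b da db.
by rewrite /maxn; case: ifP.
Qed.

Lemma span_on_attained X f :
  X != set0 -> exists2 y, y \in X & span_on X f = (f y).2.
Proof.
by rewrite -card_gt0 => /(eq_bigmax_cond (fun u => (f u).2)) [y yX My]; exists y.
Qed.

Lemma put_on_top_notin X f x N :
  x \notin X -> {in X, put_on_top x N f =1 f}.
Proof. by move=> xX u uX; rewrite /put_on_top; case: eqP => // ux; rewrite -ux uX in xX. Qed.

Lemma span_on_put_on_top X f x N :
  x \notin X -> span_on X f <= N + w x -> span_on (x |: X) (put_on_top x N f) = N + w x.
Proof.
move=> xX spX; rewrite span_on_setU (eq_span_on (put_on_top_notin f N xX)).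
by rewrite /span_on big_set1 /put_on_top eqxx (maxn_idPl spX).
Qed.

Lemma partial_strategy_subset X Y f :
  Y \subset X -> partial_strategy X f -> partial_strategy Y f.
Proof.
move=> /subsetP YX [H1 H2].
split=> [u /YX|v1 v2 /YX v1X /YX v2X ne /(H2 _ _ v1X v2X ne)]; first exact: H1.
move=> [v3 [p3 [n3|l3]]]; exists v3; split=> //; [left|by right].
by apply: contra n3; apply: YX.
Qed.

Lemma eq_partial_strategy X f g :
  {in X, f =1 g} -> partial_strategy X f -> partial_strategy X g.
Proof.
move=> fg [H1 H2]; split=> [u uX|v1 v2 v1X v2X ne]; first by rewrite -fg //; apply: H1.
rewrite -!fg // => /(H2 _ _ v1X v2X ne) [v3 [p3 H3]]; exists v3; split=> //.
case: (boolP (v3 \in X)) => v3X; last by left.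
by rewrite -!fg //; case: H3 => [|?]; [rewrite v3X|right].
Qed.

Lemma partial_strategy_put_on_top Y f x N :
  0 < w x -> partial_strategy Y f -> x \notin Y -> span_on Y f <= N ->
  partial_strategy (x |: Y) (put_on_top x N f).
Proof.
move=> wx fY xY spY; set g := put_on_top x N f.
have [H1 H2] := eq_partial_strategy (fun u uY => esym (put_on_top_notin f N xY uY)) fY.
have gx : g x = (N, N + w x) by rewrite /g /put_on_top eqxx.
have below u : u \in Y -> igt (g x) (g u).
  move=> uY; rewrite gx /igt /g (put_on_top_notin _ _ xY uY).
  exact: leq_trans (leq_span_on _ uY) spY.
split=> [u|v1 v2].
  by rewrite in_setU1 => /orP[/eqP->|/H1//]; rewrite gx /ilen /= addKn -{1}(addn0 N) ltn_add2l.
rewrite !in_setU1 => /orP[/eqP->|v1Y] /orP[/eqP->|v2Y] ne.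
- by rewrite eqxx in ne.
- by rewrite (negbTE (igt_nomeet (below _ v2Y))).
- by rewrite imeetC (negbTE (igt_nomeet (below _ v1Y))).
move=> /(H2 _ _ v1Y v2Y ne) [v3 [p3 [n3|l3]]]; exists v3; split=> //; last by right.
case: (eqVneq v3 x) => [->|v3x]; first by right; rewrite !below.
by left; rewrite in_setU1 negb_or v3x.
Qed.

Lemma partial_strategy_top X f y :
  path_convex X -> partial_strategy X f -> y \in X -> span_on X f <= (f y).2 ->
  forall u, u \in X -> u != y -> (f u).2 <= (f y).1.
Proof.
move=> convX [H1 H2] yX spy u uX ne; rewrite leqNgt; apply/negP => lt.
have su := leq_span_on f uX; have [lu _] := H1 u uX; have [ly _] := H1 y yX.
have me : imeet (f u) (f y) by rewrite /imeet; lia.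
have [v3 [p3 [|[_]]]] := H2 u y uX yX ne me; first by rewrite (convX _ _ _ uX yX p3).
have v3X := convX _ _ _ uX yX p3.
have s3 := leq_span_on f v3X; have [l3 _] := H1 v3 v3X.
rewrite /igt; lia.
Qed.

Lemma span_on_glue S X1 X2 f1 f2 :
  {subset X1 <= S} -> {subset X2 <= ~: S} ->
  span_on (X1 :|: X2) (glue S f1 f2) = maxn (span_on X1 f1) (span_on X2 f2).
Proof.
move=> X1S X2S; rewrite span_on_setU; congr maxn; apply: eq_span_on => u.
  by move/X1S; rewrite /glue => ->.
by move/X2S; rewrite /glue inE => /negbTE ->.
Qed.

Lemma aligned_on_glue S X1 X2 f1 f2 :
  {subset X1 <= S} -> {subset X2 <= ~: S} -> aligned_on X1 f1 -> aligned_on X2 f2 ->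
  aligned_on (X1 :|: X2) (glue S f1 f2).
Proof.
move=> X1S X2S a1 a2 u; rewrite inE /glue => /orP[uX|uX].
  by rewrite X1S //; apply: a1.
by move: (X2S _ uX); rewrite inE => /negbTE ->; apply: a2.
Qed.

Lemma aligned_on_put_on_top X f x N :
  aligned_on X f -> w x %| N -> aligned_on (x |: X) (put_on_top x N f).
Proof.
move=> aX wN u; rewrite in_setU1 /put_on_top.
by case: (eqVneq u x) => [->|_] /=; [rewrite wN dvdn_add|move/aX].
Qed.

Lemma span_on_setT f : span_on setT f = span f.
Proof. by apply: eq_bigl => u; rewrite in_setT. Qed.

Lemma partial_strategy_setT f :
  partial_strategy setT f <-> ext_strategy e w f.
Proof.
split=> [[H1 H2]|[H1 [H2 H3]]].
  split; [|split] => [u|u|v1 v2 ne /(H2 _ _ (in_setT _) (in_setT _) ne)].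
  - by case: (H1 u (in_setT u)).
  - by case: (H1 u (in_setT u)).
  by case=> v3 [p3 [|]]; [rewrite in_setT|exists v3].
split=> [u _|v1 v2 _ _ ne /(H3 _ _ ne) [v3 [p3 H]]]; first by split.
by exists v3; split; last right.
Qed.

Hypothesis tree_e : is_tree e.

Lemma partial_strategy_setU_branch c x X1 X2 f :
  {subset X1 <= branch e c x} -> {subset X2 <= ~: branch e c x} -> x \notin X1 ->
  partial_strategy X1 f -> partial_strategy X2 f -> partial_strategy (X1 :|: X2) f.
Proof.
move=> X1S X2S xX1 [len1 sep1] [len2 sep2].
have X2S' u : u \in X2 -> u \notin branch e c x by move/X2S; rewrite inE.
have xX2 : x \notin X2 by apply/negP => /X2S'; rewrite branch_self.
have cross v1 v2 : v1 \in X1 -> v2 \in X2 -> exists v3, on_path e v1 v2 v3 /\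
    (v3 \notin X1 :|: X2 \/ igt (f v3) (f v1) /\ igt (f v3) (f v2)).
  move=> /X1S v1S /X2S' v2S; exists x; split; first exact: branch_separate v1S v2S.
  by left; rewrite inE negb_or xX1.
split=> [u|v1 v2]; first by rewrite inE => /orP[/len1|/len2].
rewrite !inE => /orP[v1X|v1X] /orP[v2X|v2X] ne me.
- have [v3 [p3 [n3|]]] := sep1 _ _ v1X v2X ne me; exists v3; split => //; last by right.
  left; rewrite inE negb_or n3 (contraL (X2S' v3)) //.
  exact: branch_convex (X1S _ v1X) (X1S _ v2X) p3.
- exact: cross.
- have [v3 [/(on_path_sym tree_e) p3 H]] := cross _ _ v2X v1X.
  by exists v3; split=> //; case: H => [|[]]; [left|right].
- have [v3 [p3 [n3|]]] := sep2 _ _ v1X v2X ne me; exists v3; split => //; last by right.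
  left; rewrite inE negb_or n3 andbT (contra (X1S v3)) //.
  exact: branchC_convex (X2S' _ v1X) (X2S' _ v2X) p3.
Qed.

Lemma partial_strategy_glue c x X1 X2 f1 f2 :
  {subset X1 <= branch e c x} -> {subset X2 <= ~: branch e c x} -> x \notin X1 ->
  partial_strategy X1 f1 -> partial_strategy X2 f2 ->
  partial_strategy (X1 :|: X2) (glue (branch e c x) f1 f2).
Proof.
move=> X1S X2S xX1 f1X f2X; apply: (partial_strategy_setU_branch X1S X2S xX1).
  by apply: eq_partial_strategy f1X => u /X1S uS; rewrite /glue uS.
by apply: eq_partial_strategy f2X => u /X2S; rewrite /glue inE => /negbTE ->.
Qed.

End PartialStrategies.

Section Alignment.
Variables (V : finType) (e : rel V) (w : V -> nat) (r : V).
Hypotheses (tree_e : is_tree e) (w_down : forall u v, on_path e r u v -> w v <= w u)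
  (w_pow2 : rounded w).

Lemma w_gt0 u : 0 < w u.
Proof. by have [j ->] := w_pow2 u; rewrite expn_gt0. Qed.

Lemma w_dvd_leq u v : w u <= w v -> w u %| w v.
Proof.
have [i ->] := w_pow2 u; have [j ->] := w_pow2 v.
by rewrite leq_exp2l // => /dvdn_exp2l.
Qed.

Lemma w_dvd_total u v : (w u %| w v) || (w v %| w u).
Proof.
by case: (leqP (w u) (w v)) => [/w_dvd_leq -> // | /ltnW/w_dvd_leq ->]; rewrite orbT.
Qed.

Definition alignable (X : {set V}) (f : V -> nat * nat) :=
  exists g, [/\ partial_strategy e w X g, aligned_on w X g & span_on X g <= span_on X f].

Section InductionStep.
Variables (X : {set V}) (f : V -> nat * nat).
Hypotheses (IH : forall (Y : {set V}) g,
    #|Y| < #|X| -> partial_strategy e w Y g -> alignable Y g)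
  (fX : partial_strategy e w X f).

Lemma alignable_nonconvex : ~ path_convex e X -> alignable X f.
Proof.
move=> ncX.
have [u [v [z [uX vX zuv zX]]]] :
    exists u v z, [/\ u \in X, v \in X, on_path e u v z & z \notin X].
  apply: NNPP => H; apply: ncX => u v z uX vX zuv; apply: NNPP => zX.
  by apply: H; exists u, v, z; split => //; apply/negP.
set S := branch e u z.
have SI : {subset X :&: S <= S} by move=> y /setIP[].
have SD : {subset X :\: S <= ~: S} by move=> y; rewrite !inE => /andP[].
have ltI : #|X :&: S| < #|X|.
  apply/proper_card/properP; split; first exact: subsetIl.
  exists u => //; rewrite inE uX /=; apply/branchP => /(on_path_same tree_e) zu.
  by rewrite zu uX in zX.
have ltD : #|X :\: S| < #|X|.
  apply/proper_card/properP; split; first exact: subsetDl.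
  by exists v; rewrite // inE vX andbT negbK; apply/branchP.
have [g1 [g1X a1 s1]] := IH ltI (partial_strategy_subset (subsetIl X S) fX).
have [g2 [g2X a2 s2]] := IH ltD (partial_strategy_subset (subsetDl X S) fX).
rewrite -(setID X S); exists (glue S g1 g2); split.
- by apply: (partial_strategy_glue tree_e SI SD) => //; rewrite inE negb_and zX.
- exact: aligned_on_glue.
- by rewrite span_on_glue // span_on_setU geq_max !leq_max s1 s2 orbT.
Qed.

Section ConvexStep.
Variable x : V.
Hypotheses (convX : path_convex e X) (xX : x \in X) (top_x : span_on X f <= (f x).2).

Local Notation S := (branch e r x).
Local Notation A := ((X :&: S) :\ x).
Local Notation B := (X :\: S).

Lemma A_branch : {subset A <= S}.
Proof. by move=> u; rewrite !inE => /and3P[]. Qed.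

Lemma B_branch : {subset B <= ~: S}.
Proof. by move=> u; rewrite !inE => /andP[]. Qed.

Lemma x_notin_A : x \notin A.
Proof. by rewrite !inE eqxx. Qed.

Lemma x_notin_B : x \notin B.
Proof. by rewrite inE branch_self. Qed.

Lemma A_subset : A \subset X.
Proof. by apply/subsetP => u; rewrite !inE => /and3P[]. Qed.

Lemma X_decomp : x |: (A :|: B) = X.
Proof.
apply/setP => u; rewrite !inE; case: (eqVneq u x) => [->|_] //=.
by case: (asbool (on_path e r u x)); rewrite /= ?andbT ?andbF ?orbF.
Qed.

Lemma card_A_lt : #|A| < #|X|.
Proof.
apply/proper_card/properP; split; first exact: A_subset.
by exists x; rewrite // x_notin_A.
Qed.

Lemma card_B_lt : #|B| < #|X|.
Proof.
apply/proper_card/properP; split; first exact: subsetDl.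
by exists x; rewrite // x_notin_B.
Qed.

Lemma B_convex : path_convex e B.
Proof.
move=> u v z; rewrite !in_setD => /andP[uS uX] /andP[vS vX] zuv.
by rewrite (branchC_convex tree_e uS vS zuv) (convX uX vX zuv).
Qed.

Lemma span_on_below_x (Y : {set V}) : Y \subset X -> x \notin Y -> span_on Y f <= (f x).1.
Proof.
move=> /subsetP YX xY; apply: span_on_le => u uY.
apply: (partial_strategy_top convX fX xX top_x (YX _ uY)).
by apply: contraNneq xY => <-.
Qed.

Lemma w_x_dvd_span_A g : aligned_on w A g -> w x %| span_on A g.
Proof.
move=> aA; apply: dvdn_span_on => u uA; have /andP[_] := aA u uA.
by apply: dvdn_trans; apply/w_dvd_leq/w_down/branchP/A_branch.
Qed.

Lemma x_top_room : (f x).1 + w x <= span_on X f.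
Proof. by have [lt le] := fX.1 x xX; have := leq_span_on f xX; rewrite /ilen in le; lia. Qed.

Lemma x_notin_AB (Y : {set V}) : Y \subset B -> x \notin A :|: Y.
Proof.
move=> /subsetP YB; rewrite in_setU negb_or x_notin_A /=.
by apply: contra x_notin_B; apply: YB.
Qed.

Lemma partial_strategy_glue_AB (Y : {set V}) gA gB : Y \subset B ->
  partial_strategy e w A gA -> partial_strategy e w Y gB ->
  partial_strategy e w (A :|: Y) (glue S gA gB).
Proof.
move=> /subsetP YB; apply: (partial_strategy_glue tree_e A_branch _ x_notin_A).
by move=> u /YB /B_branch.
Qed.

Lemma span_on_glue_AB (Y : {set V}) gA gB : Y \subset B ->
  span_on (A :|: Y) (glue S gA gB) = maxn (span_on A gA) (span_on Y gB).
Proof. by move=> /subsetP YB; apply: span_on_glue A_branch _ => u /YB /B_branch. Qed.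

Lemma notin_setU1_AB y : y \in B -> y \notin x |: (A :|: B :\ y).
Proof.
move=> /B_branch; rewrite inE => yS; apply/negP.
rewrite in_setU1 in_setU => /orP[/eqP yx|/orP[/A_branch|]].
- by move: yS; rewrite yx branch_self.
- by rewrite (negbTE yS).
- by rewrite in_setD1 eqxx.
Qed.

Lemma X_decomp_setD1 y : y \in B -> y |: (x |: (A :|: B :\ y)) = X.
Proof. by move=> yB; rewrite setUCA [y |: (A :|: _)]setUCA setD1K // X_decomp. Qed.

Section Realigned.
Variables gA gB : V -> nat * nat.
Hypotheses (gAX : partial_strategy e w A gA) (aA : aligned_on w A gA)
  (sA : span_on A gA <= span_on A f) (gBX : partial_strategy e w B gB)
  (aB : aligned_on w B gB) (sB : span_on B gB <= span_on B f).

Lemma alignable_convex_dvd : w x %| maxn (span_on A gA) (span_on B gB) -> alignable X f.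
Proof.
set N := maxn _ _ => wN.
have NX : N <= (f x).1.
  by rewrite geq_max (leq_trans sA) ?(leq_trans sB) ?span_on_below_x
    ?A_subset ?x_notin_A ?subsetDl ?x_notin_B.
have spAB : span_on (A :|: B) (glue S gA gB) = N := span_on_glue_AB _ _ (subxx B).
rewrite -X_decomp; exists (put_on_top w x N (glue S gA gB)); split.
- apply: partial_strategy_put_on_top; rewrite ?w_gt0 ?x_notin_AB ?spAB //.
  exact: partial_strategy_glue_AB.
- by apply: aligned_on_put_on_top wN; apply: aligned_on_glue A_branch B_branch aA aB.
rewrite span_on_put_on_top ?x_notin_AB ?spAB ?leq_addr // X_decomp.
by apply: leq_trans x_top_room; rewrite leq_add2r.
Qed.

Lemma alignable_convex_ndvd : ~~ (w x %| maxn (span_on A gA) (span_on B gB)) -> alignable X f.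
Proof.
set P := span_on A gA; set M := span_on B gB => ndvd.
have wxP : w x %| P := w_x_dvd_span_A aA.
have PM : P < M by rewrite ltnNge; apply: contra ndvd => /maxn_idPl ->.
have [y yB My] : exists2 y, y \in B & M = (gB y).2.
  apply: span_on_attained; apply: contraTneq PM => B0.
  by rewrite /M B0 /span_on big_set0.
have wyM : w y %| M by rewrite My; case/andP: (aB yB).
have wyx : w y %| w x.
  case/orP: (w_dvd_total y x) => // /dvdn_trans/(_ wyM) wxM.
  by move: ndvd; rewrite (maxn_idPr (ltnW PM)) wxM.
have [ly wly] := gBX.1 y yB; rewrite /ilen -My in wly.
set K := M - w y.
have PK : P <= K := leq_subr_dvdn (dvdn_trans wyx wxP) wyM PM.
have B'K : span_on (B :\ y) gB <= K.
  apply: span_on_le => u; rewrite in_setD1 => /andP[uy uB].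
  have := partial_strategy_top B_convex gBX yB (eq_leq My) uB uy; lia.
set Y := x |: (A :|: B :\ y).
have BY : B :\ y \subset B := subD1set B y.
have hY : partial_strategy e w Y (put_on_top w x K (glue S gA gB)).
  apply: partial_strategy_put_on_top; rewrite ?w_gt0 ?x_notin_AB //.
    exact: partial_strategy_glue_AB BY gAX (partial_strategy_subset BY gBX).
  by rewrite span_on_glue_AB // geq_max PK B'K.
have ltY : #|Y| < #|X| by rewrite -(X_decomp_setD1 yB) cardsU1 notin_setU1_AB.
have [h [hY' ah sh]] := IH ltY hY.
have spY : span_on Y h <= K + w x.
  rewrite (leq_trans sh) // span_on_put_on_top ?x_notin_AB //.
  by rewrite span_on_glue_AB // geq_max (leq_trans PK) ?(leq_trans B'K) ?leq_addr.
have MX : M + w x <= span_on X f.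
  apply: leq_trans x_top_room; rewrite leq_add2r (leq_trans sB) //.
  by rewrite span_on_below_x ?subsetDl ?x_notin_B.
rewrite -(X_decomp_setD1 yB); exists (put_on_top w y (K + w x) h); split.
- exact: partial_strategy_put_on_top (w_gt0 y) hY' (notin_setU1_AB yB) spY.
- by apply: aligned_on_put_on_top ah _; rewrite dvdn_add // dvdn_sub.
have KM : K + w y = M by rewrite subnK // (leq_trans wly) ?leq_subr.
rewrite span_on_put_on_top ?notin_setU1_AB ?X_decomp_setD1 //; first by rewrite addnAC KM.
by rewrite (leq_trans spY) // leq_addr.
Qed.

Lemma alignable_convex : alignable X f.
Proof.
case: (boolP (w x %| maxn (span_on A gA) (span_on B gB))).
  exact: alignable_convex_dvd.
exact: alignable_convex_ndvd.
Qed.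
End Realigned.
End ConvexStep.

Lemma alignable_step : alignable X f.
Proof.
case: (classic (path_convex e X)) => [convX|]; last exact: alignable_nonconvex.
case: (eqVneq X set0) => [X0|/(span_on_attained f) [x xX /eq_leq top_x]].
  by exists f; split => // u; rewrite X0 inE.
have [gA [gAX aA sA]] := IH (card_A_lt xX) (partial_strategy_subset (A_subset x) fX).
have [gB [gBX aB sB]] := IH (card_B_lt xX) (partial_strategy_subset (subsetDl X _) fX).
exact: (alignable_convex convX xX top_x gAX aA sA gBX aB sB).
Qed.
End InductionStep.

Lemma alignable_partial_strategy (X : {set V}) (f : V -> nat * nat) :
  partial_strategy e w X f -> alignable X f.
Proof.
have [n] := ubnP #|X|; elim: n X f => // n IHn X f ltX fX.
by apply: alignable_step fX => Y g ltY; apply: IHn; apply: leq_trans ltY _.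
Qed.
End Alignment.

Lemma exists_ext_strategy (V : finType) (e : rel V) (w : V -> nat) :
  exists f, ext_strategy e w f.
Proof.
pose W := (\max_u w u).+1.
pose f (u : V) := (enum_rank u * W, (enum_rank u).+1 * W).
have fW u : (f u).2 = (f u).1 + W by rewrite /= mulSn addnC.
exists f; split; [|split].
- by move=> u; rewrite fW -{1}(addn0 (f u).1) ltn_add2l.
- by move=> u; rewrite /ilen fW addKn; apply/leqW/leq_bigmax.
suff sep v1 v2 : enum_rank v1 < enum_rank v2 -> ~~ imeet (f v1) (f v2).
  move=> v1 v2 ne.
  case: (ltngtP (enum_rank v1) (enum_rank v2)) => [/sep|/sep|/val_inj/enum_rank_inj v12].
  - by move/negP.
  - by rewrite imeetC => /negP.
  by rewrite v12 eqxx in ne.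
by move=> lt12; rewrite imeetC; apply: igt_nomeet; rewrite /igt /= leq_mul2r lt12 orbT.
Qed.

Lemma exists_optimal_ext_strategy (V : finType) (e : rel V) (w : V -> nat) :
  exists f, optimal_ext_strategy e w f.
Proof.
pose P n := asbool (exists f, ext_strategy e w f /\ span f = n).
have [f0 f0S] := exists_ext_strategy e w.
have exP : exists n, P n by exists (span f0); apply/asboolP; exists f0.
case: (ex_minnP exP) => m /asboolP [f [fS <-]] f_min.
by exists f; split=> // g gS; apply: f_min; apply/asboolP; exists g.
Qed.

Theorem mainTheorem17 (V : finType) (e : rel V) (w : V -> nat) :
  is_tree e -> down_monotonic e w -> rounded w ->
  exists f : V -> nat * nat, optimal_ext_strategy e w f /\ aligned w f.
Proof.
move=> tree_e [r w_down] w_pow2.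
have [f [/partial_strategy_setT fS f_opt]] := exists_optimal_ext_strategy e w.
have [g [/partial_strategy_setT gS g_aligned g_span]] :=
  alignable_partial_strategy tree_e w_down w_pow2 fS.
exists g; split; last by move=> u; apply: g_aligned; rewrite in_setT.
split=> // h hS; apply: leq_trans (f_opt h hS).
by rewrite -!span_on_setT.
Qed.
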